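(* Let $M_1,\dots,M_n \in \mathbb{R}^{a\times b}$, $\lambda\ge 0$, $r_1\le a$, $r_2 \le b$, let $D\in\mathbb{R}^{a\times a}$ be the cyclic second-difference matrix defined in the context, and let $A = I + \lambda D^\top D \in \mathbb{R}^{a\times a}$. Then the problem $$\max_{\substack{L\in\mathbb{R}^{a\times r_1},\ R\in\mathbb{R}^{b\times r_2}\\ L^\top L = I,\ R^\top R = I}} \sum_{i=1}^n \operatorname{Tr}\!\Big( L (I + \lambda L^\top D^\top D L)^{-1} L^\top M_i R R^\top M_i^\top\Big)$$ is equivalent to the problem $$\max_{\substack{U\in\mathbb{R}^{a\times r_1},\ R\in\mathbb{R}^{b\times r_2}\\ U^\top U = I,\ R^\top R = I}} \sum_{i=1}^n \operatorname{Tr}\!\Big( U U^\top A^{-1/2} M_i R R^\top M_i^\top A^{-1/2}\Big),$$ where $U$ and $L$ correspond via $U$ being the matrix of left singular vectors in a thin SVD $A^{1/2}L = U \Sigma V^\top$ (so the two objectives coincide), and the column space of $L$ equals the column space of $A^{-1/2}U$.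
   Context: $D\in\mathbb{R}^{a\times a}$ is the cyclic second-difference matrix: $D_{jj} = 2$ for all $j$, $D_{j,j+1} = D_{j+1,j} = -1$ for $j=1,\dots,a-1$, $D_{1a} = D_{a1} = -1$, and all other entries are $0$. $A^{1/2}$ and $A^{-1/2}$ denote the symmetric positive definite square root of $A$ and its inverse. $\operatorname{Tr}$ denotes the trace. *)

From mathcomp Require Import all_boot all_order all_algebra.
Set Implicit Arguments. Unset Strict Implicit. Unset Printing Implicit Defensive.
Import Order.TTheory GRing.Theory Num.Theory.
Local Open Scope ring_scope.

(* Cyclic second-difference matrix: 2 on the diagonal, -1 on the (cyclic)
   super/sub-diagonals, 0 elsewhere.  The diagonal takes priority (only
   relevant for the degenerate case a = 1). *)
Definition cycD (R : ringType) (a : nat) : 'M[R]_a :=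
  \matrix_(i < a, j < a)
    if i == j then 2
    else if (((i.+1 %% a)%N == j) || ((j.+1 %% a)%N == i)) then -1 else 0.

Definition Amat (R : ringType) (a : nat) (lam : R) : 'M[R]_a :=
  1%:M + lam *: ((cycD R a)^T *m cycD R a).

Definition sym_posdef (R : numDomainType) (a : nat) (S : 'M[R]_a) : Prop :=
  S^T = S /\ forall v : 'cV[R]_a, v != 0 -> 0 < (v^T *m S *m v) 0 0.

Definition objL (R : fieldType) (a b n r1 r2 : nat) (M : 'I_n -> 'M[R]_(a, b))
  (lam : R) (L : 'M[R]_(a, r1)) (Rm : 'M[R]_(b, r2)) : R :=
  \sum_(i < n) \tr (L *m invmx (1%:M + lam *: (L^T *m (cycD R a)^T *m cycD R a *m L))
                      *m L^T *m M i *m Rm *m Rm^T *m (M i)^T).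

(* second objective: sum_i Tr(U U^T A^{-1/2} M_i R R^T M_i^T A^{-1/2}),
   where Sinv stands for A^{-1/2} *)
Definition objU (R : fieldType) (a b n r1 r2 : nat) (M : 'I_n -> 'M[R]_(a, b))
  (Sinv : 'M[R]_a) (U : 'M[R]_(a, r1)) (Rm : 'M[R]_(b, r2)) : R :=
  \sum_(i < n) \tr (U *m U^T *m Sinv *m M i *m Rm *m Rm^T *m (M i)^T *m Sinv).

Definition thin_svd (R : numDomainType) (a r : nat) (X : 'M[R]_(a, r))
  (U : 'M[R]_(a, r)) (Sig : 'M[R]_r) (V : 'M[R]_r) : Prop :=
  U^T *m U = 1%:M /\ V^T *m V = 1%:M /\
  (exists s : 'rV[R]_r, Sig = diag_mx s /\ forall j, 0 <= s 0 j) /\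
  X = U *m Sig *m V^T.

Definition colspace_eq (R : fieldType) (a r1 r2 : nat)
  (X : 'M[R]_(a, r1)) (Y : 'M[R]_(a, r2)) : Prop :=
  (X^T == Y^T)%MS.

From mathcomp Require Import all_boot all_order all_algebra.
From mathcomp Require Import complex ring.
Set Implicit Arguments. Unset Strict Implicit. Unset Printing Implicit Defensive.
Import Order.TTheory GRing.Theory Num.Theory.
Local Open Scope ring_scope.

(* Since S = A^(1/2) is invertible and L has orthonormal columns, S L has full
   column rank, so in a thin SVD S L = U Sig V^T the factor K = Sig V^T is
   invertible and L = S^-1 U K.  As L^T L = I, the matrix I + lam L^T D^T D L
   is L^T A L = K^T K, hence L (L^T A L)^-1 L^T = S^-1 U U^T S^-1 and the two
   objectives agree by cyclicity of the trace; col(L) = col(S^-1 U) because K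
   is invertible.  Conversely, for a feasible U the polar factor of S^-1 U is
   a feasible L of the same shape.  The thin SVD comes from the real spectral
   theorem applied to X^T X, proved by induction on the size: a real symmetric
   matrix has a real eigenvector (the real or imaginary part of a complex
   one), and a Householder reflection maps it to the first basis vector. *)

Lemma trmx11 (T : Type) (A : 'M[T]_1) : A^T = A.
Proof. by apply/matrixP => i j; rewrite !ord1 mxE. Qed.

Lemma delta_mulmx_tr (R : pzRingType) n (i : 'I_n) (x : 'rV[R]_n) :
  'e_i *m x^T = (x 0 i)%:M.
Proof. by rewrite -rowE [LHS]mx11_scalar !mxE. Qed.

Lemma mulmxE_row_col (R : pzSemiRingType) m n p (A : 'M[R]_(m, n)) (B : 'M[R]_(n, p))
    i j :
  (A *m B) i j = (row i A *m col j B) 0 0.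
Proof. by rewrite !mxE; apply: eq_bigr => k _; rewrite !mxE. Qed.

Lemma symmetric_eigenrow_block (R : pzRingType) n (C : 'M[R]_(1 + n)) a :
  C^T = C -> row 0 C = a *: 'e_0 -> C = block_mx a%:M 0 0 (drsubmx C).
Proof.
move=> C_sym /rowP C0.
have Cr (i : 'I_1) j : C (lshift n i) j = a * (j == 0)%:R.
  have -> : lshift n i = 0 by apply/val_inj; rewrite /= ord1.
  by move: (C0 j); rewrite !mxE eqxx eq_sym.
have ur : ursubmx C = 0 by apply/matrixP => i j; rewrite !mxE Cr mulr0.
have ul : ulsubmx C = a%:M by apply/matrixP => i j; rewrite !mxE Cr !ord1 mulr1.
have dl : dlsubmx C = 0 by rewrite -[dlsubmx C]trmxK trmx_dlsub C_sym ur trmx0.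
by rewrite -{1}[C]submxK ur ul dl.
Qed.

Section SumOfSquares.
Variable R : realDomainType.

Lemma mulmx_tr_ge0 n (x : 'rV[R]_n) : 0 <= (x *m x^T) 0 0.
Proof. by rewrite mxE; apply: sumr_ge0 => k _; rewrite mxE -expr2 sqr_ge0. Qed.

Lemma mulmx_tr_eq0 n (x : 'rV[R]_n) : ((x *m x^T) 0 0 == 0) = (x == 0).
Proof.
apply/idP/eqP => [|->]; last by rewrite mul0mx mxE.
rewrite mxE psumr_eq0 => [/allP x0|k _]; last by rewrite mxE -expr2 sqr_ge0.
apply/rowP => j; have /implyP := x0 j (mem_index_enum j).
by rewrite !mxE -expr2 sqrf_eq0 => /(_ isT)/eqP.
Qed.

Lemma mulmx_tr_gt0 n (x : 'rV[R]_n) : (0 < (x *m x^T) 0 0) = (x != 0).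
Proof. by rewrite lt_def mulmx_tr_ge0 mulmx_tr_eq0 andbT. Qed.

End SumOfSquares.

Lemma orthogonal_with_row0 (R : realFieldType) n (u : 'rV[R]_n.+1) :
  u *m u^T = 1%:M -> exists H : 'M[R]_n.+1, H *m H^T = 1%:M /\ row 0 H = u.
Proof.
move=> uu; set w := u - 'e_0; set c := u 0 0.
have [w0|w_neq0] := eqVneq w 0.
  exists 1%:M; rewrite trmx1 mulmx1 row1; split=> //.
  by apply/esym/eqP; rewrite -subr_eq0 -/w w0.
have e0w : 'e_0 *m w^T = (c - 1)%:M.
  by rewrite /w raddfB mulmxBr !delta_mulmx_tr mxE eqxx raddfB.
have ww : w *m w^T = (2 - 2 * c)%:M.
  rewrite /w raddfB mulmxBl !mulmxBr uu -[u *m _^T]trmx11 trmx_mul trmxK.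
  by rewrite !delta_mulmx_tr mxE /= -!raddfB /=; congr _%:M; rewrite /c; ring.
set t := 2 - 2 * c in ww.
have t_neq0 : t != 0.
  by apply: contraNneq w_neq0 => t0; rewrite -mulmx_tr_eq0 ww t0 mxE.
set W := w^T *m w; set k := 2 / t.
have WW : W *m W = t *: W by rewrite mulmxA -(mulmxA w^T) ww mul_mx_scalar -scalemxAl.
have W_sym : W^T = W by rewrite /W trmx_mul trmxK.
exists (1%:M - k *: W); split.
  rewrite [_^T]raddfB /= [(k *: W)^T]linearZ /= trmx1 W_sym.
  rewrite mulmxBl !mulmxBr !mulmx1 mul1mx -scalemxAl -scalemxAr WW !scalerA.
  have kkt : k * k * t = k + k by rewrite /k; field.
  by rewrite kkt scalerDl opprB addrK subrK.
rewrite rowE mulmxBr mulmx1 -scalemxAr /W mulmxA e0w mul_scalar_mx scalerA.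
have -> : k * (c - 1) = -1 by rewrite /k /t; field; rewrite -/t.
by rewrite scaleN1r opprK /w addrC subrK.
Qed.

Section RealSymmetric.
Variable R : rcfType.
Local Notation Re := (@complex.Re R).
Local Notation Im := (@complex.Im R).
Local Notation toC := (real_complex R).

Lemma Re_sum I (r : seq I) (P : pred I) (F : I -> R[i]) :
  Re (\sum_(k <- r | P k) F k) = \sum_(k <- r | P k) Re (F k).
Proof. by apply: big_morph => // -[? ?] [? ?]. Qed.

Lemma Im_sum I (r : seq I) (P : pred I) (F : I -> R[i]) :
  Im (\sum_(k <- r | P k) F k) = \sum_(k <- r | P k) Im (F k).
Proof. by apply: big_morph => // -[? ?] [? ?]. Qed.

Lemma map_mx_Re_mul m n p (v : 'M[R[i]]_(m, n)) (B : 'M[R]_(n, p)) :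
  map_mx Re (v *m map_mx toC B) = map_mx Re v *m B.
Proof.
apply/matrixP => i j; rewrite !mxE Re_sum.
by apply: eq_bigr => k _; rewrite !mxE; case: (v i k) => x y /=; ring.
Qed.

Lemma map_mx_Im_mul m n p (v : 'M[R[i]]_(m, n)) (B : 'M[R]_(n, p)) :
  map_mx Im (v *m map_mx toC B) = map_mx Im v *m B.
Proof.
apply/matrixP => i j; rewrite !mxE Im_sum.
by apply: eq_bigr => k _; rewrite !mxE; case: (v i k) => x y /=; ring.
Qed.

Lemma symmetric_real_eigenvector n (B : 'M[R]_n.+1) : B^T = B ->
  exists a, exists2 x : 'rV_n.+1, x != 0 & x *m B = a *: x.
Proof.
move=> Bsym; have [l /eigenvalueP[v vB v_neq0]] :=
  eigenvalue_closed (map_mx toC B) (ltn0Sn n).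
set x := map_mx Re v; set y := map_mx Im v.
have xB : x *m B = Re l *: x - Im l *: y.
  rewrite -map_mx_Re_mul vB; apply/rowP => j; rewrite !mxE.
  by case: (l) (v 0 j) => ? ? [? ?] /=; ring.
have yB : y *m B = Im l *: x + Re l *: y.
  rewrite -map_mx_Im_mul vB; apply/rowP => j; rewrite !mxE.
  by case: (l) (v 0 j) => ? ? [? ?] /=; ring.
have v_eq0 : x = 0 -> y = 0 -> v = 0.
  move=> /rowP x0 /rowP y0; apply/rowP => j.
  by move: (x0 j) (y0 j); rewrite !mxE; case: (v 0 j) => ? ? /= -> ->.
(* [x B y^T = y B x^T] forces [Im l (|x|^2 + |y|^2) = 0]. *)
have Im_l : Im l = 0.
  have xy : y *m x^T = x *m y^T by rewrite -[LHS]trmx11 trmx_mul trmxK.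
  have : x *m B *m y^T = y *m B *m x^T.
    by rewrite -[LHS]trmx11 !trmx_mul trmxK Bsym mulmxA.
  rewrite xB yB mulmxBl mulmxDl -!scalemxAl xy => /rowP/(_ 0)/eqP.
  rewrite -subr_eq0 => /eqP e.
  have {e} : - Im l * ((x *m x^T) 0 0 + (y *m y^T) 0 0) = 0.
    by rewrite -[RHS]e !mxE; ring.
  move/eqP; rewrite mulf_eq0 oppr_eq0 paddr_eq0 ?mulmx_tr_ge0 // !mulmx_tr_eq0.
  case/orP => [/eqP //|/andP[/eqP x0 /eqP y0]].
  by move: v_neq0; rewrite v_eq0 ?eqxx.
rewrite Im_l scale0r subr0 in xB; rewrite Im_l scale0r add0r in yB.
have [x0|x_neq0] := eqVneq x 0; last by exists (Re l), x.
exists (Re l), y => //; apply: contraNneq v_neq0 => y0; by rewrite v_eq0.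
Qed.

Lemma unit_eigenvector n (B : 'M[R]_n) a (x : 'rV[R]_n) :
  x != 0 -> x *m B = a *: x ->
  exists2 u : 'rV[R]_n, u *m u^T = 1%:M & u *m B = a *: u.
Proof.
move=> x_neq0 xB; set t := (x *m x^T) 0 0.
have t_gt0 : 0 < t by rewrite mulmx_tr_gt0.
exists ((Num.sqrt t)^-1 *: x); last by rewrite -scalemxAl xB !scalerA mulrC.
rewrite linearZ /= -scalemxAl -scalemxAr scalerA [x *m x^T]mx11_scalar -/t.
by rewrite scale_scalar_mx -invfM -expr2 sqr_sqrtr ?ltW // mulVf ?gt_eqF.
Qed.

Theorem symmetric_orthogonal_diag n (B : 'M[R]_n) : B^T = B ->
  exists (V : 'M[R]_n) (d : 'rV[R]_n),
    V *m V^T = 1%:M /\ V *m B *m V^T = diag_mx d.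
Proof.
elim: n B => [|n IH]; first by exists 1%:M, 0; split; apply/matrixP => -[].
rewrite -[n.+1]/(1 + n)%N => B B_sym.
have [a [x x_neq0 xB]] := symmetric_real_eigenvector B_sym.
have [u uu uB] := unit_eigenvector x_neq0 xB.
have [H [HH Hu]] := orthogonal_with_row0 uu.
set C : 'M_(1 + n) := H *m B *m H^T.
have C_sym : C^T = C by rewrite /C !trmx_mul trmxK B_sym mulmxA.
have C0 : row 0 C = a *: 'e_0.
  by rewrite /C !row_mul Hu uB -scalemxAl -Hu -row_mul HH row1.
have D_sym : (drsubmx C)^T = drsubmx C by rewrite trmx_drsub C_sym.
have [V' [d' [V'V' V'D]]] := IH _ D_sym.
pose blk : 'M_(1 + n) := block_mx 1%:M 0 0 V'.
exists (blk *m H), (row_mx a%:M d'); split.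
  rewrite trmx_mul mulmxA -(mulmxA blk) HH mulmx1 /blk tr_block_mx !trmx0 trmx1.
  by rewrite mulmx_block !(mulmx0, mul0mx, mulmx1, addr0, add0r) V'V' -scalar_mx_block.
have -> : blk *m H *m B *m (blk *m H)^T = blk *m C *m blk^T by rewrite trmx_mul !mulmxA.
rewrite (symmetric_eigenrow_block C_sym C0) /blk tr_block_mx !trmx0 trmx1 !mulmx_block.
rewrite !(mulmx0, mul0mx, mulmx1, mul1mx, addr0, add0r) V'D diag_mx_row.
by congr block_mx; apply/rowP => i; rewrite !ord1 !mxE.
Qed.

Lemma thin_svd_exists a r (X : 'M[R]_(a, r)) :
  row_free X^T -> exists (U : 'M[R]_(a, r)) (Sig V : 'M[R]_r), thin_svd X U Sig V.
Proof.
move=> X_free; have XX_sym : (X^T *m X)^T = X^T *m X by rewrite trmx_mul trmxK.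
have [W [d [WW WD]]] := symmetric_orthogonal_diag XX_sym.
have d_gt0 j : 0 < d 0 j.
  move/matrixP/(_ j j): WD; rewrite [RHS]mxE eqxx mulr1n => <-.
  rewrite mulmxA -mulmxA mulmxE_row_col -[X *m W^T]trmxK -tr_row trmx_mul !trmxK row_mul.
  rewrite mulmx_tr_gt0 mulmx_free_eq0 //; apply/eqP => Wj0; move/matrixP/(_ j j): WW.
  by rewrite mulmxE_row_col -tr_row Wj0 mul0mx !mxE eqxx => /eqP; rewrite eq_sym oner_eq0.
pose s := \row_j Num.sqrt (d 0 j); pose s' := \row_j (s 0 j)^-1.
have s's : diag_mx s' *m diag_mx s = 1%:M.
  rewrite mulmx_diag -diag_const_mx; congr diag_mx; apply/rowP => j.
  by rewrite !mxE mulVf // gt_eqF // sqrtr_gt0.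
exists (X *m W^T *m diag_mx s'), (diag_mx s), W^T; split; last split; last split.
- rewrite !trmx_mul trmxK tr_diag_mx.
  have -> : diag_mx s' *m (W *m X^T) *m (X *m W^T *m diag_mx s')
    = diag_mx s' *m (W *m (X^T *m X) *m W^T) *m diag_mx s' by rewrite !mulmxA.
  rewrite WD !mulmx_diag -diag_const_mx; congr diag_mx; apply/rowP => j.
  rewrite !mxE -{2}(sqr_sqrtr (ltW (d_gt0 j))); field.
  by rewrite gt_eqF // sqrtr_gt0.
- by rewrite trmxK.
- by exists s; split => // j; rewrite mxE sqrtr_ge0.
- by rewrite -!mulmxA (mulmxA (diag_mx s')) s's mul1mx trmxK (mulmx1C WW) mulmx1.
Qed.

End RealSymmetric.

Lemma sym_posdef_unit (R : numFieldType) n (S : 'M[R]_n) : sym_posdef S -> S \in unitmx.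
Proof.
case=> _ S_pos; rewrite unitmxE unitfE; apply/negP => /det0P[v v_neq0 vS].
have vT_neq0 : v^T != 0.
  by apply: contra_neq v_neq0 => /(congr1 trmx); rewrite trmxK trmx0.
by move: (S_pos _ vT_neq0); rewrite trmxK vS mul0mx mxE ltxx.
Qed.

Lemma row_free_tr_orthonormal (F : fieldType) m n (L : 'M[F]_(m, n)) :
  L^T *m L = 1%:M -> row_free L^T.
Proof.
by move=> LL; rewrite /row_free eqn_leq rank_leq_row -{1}(mxrank1 F n) -LL mxrankM_maxl.
Qed.

Lemma row_free_tr_unit_mul (F : fieldType) m n (S : 'M[F]_m) (X : 'M[F]_(m, n)) :
  S \in unitmx -> row_free X^T -> row_free (S *m X)^T.
Proof.
by move=> S_unit X_free; rewrite /row_free trmx_mul mxrankMfree // row_free_unit unitmx_tr.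
Qed.

Lemma thin_svd_factor_unit (R : numFieldType) a r (X U : 'M[R]_(a, r)) (Sig V : 'M[R]_r) :
  thin_svd X U Sig V -> row_free X^T -> Sig *m V^T \in unitmx.
Proof.
case=> _ [_ [_ XE]] X_free; rewrite -row_free_unit /row_free eqn_leq rank_leq_row /=.
by rewrite -{1}(eqP X_free) mxrank_tr XE -mulmxA mxrankM_maxr.
Qed.

Lemma colspace_eq_mulmx_unit (F : fieldType) a r (X : 'M[F]_(a, r)) (K : 'M[F]_r) :
  K \in unitmx -> colspace_eq (X *m K) X.
Proof.
move=> K_unit; apply/eqmxP; rewrite trmx_mul; apply: eqmxMfull.
by rewrite row_full_unit unitmx_tr.
Qed.

Lemma orthonormal_colbasis (R : rcfType) a r (P : 'M[R]_(a, r)) : row_free P^T ->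
  exists2 L : 'M[R]_(a, r), L^T *m L = 1%:M & exists2 K, K \in unitmx & L = P *m K.
Proof.
move=> P_free; have [U [Sig [V svd]]] := thin_svd_exists P_free.
have K_unit := thin_svd_factor_unit svd P_free.
case: svd => UU [VV [_ PE]]; have V_unit : V^T \in unitmx by case: (mulmx1_unit VV).
exists (U *m V^T).
  by rewrite trmx_mul trmxK mulmxA -(mulmxA V) UU mulmx1 (mulmx1C VV).
exists (invmx (Sig *m V^T) *m V^T); first by rewrite unitmx_mul unitmx_inv K_unit.
by rewrite PE -(mulmxA U Sig) (mulmxA (U *m _)) mulmxK.
Qed.

Lemma gram_proj_mulmx_unit (F : fieldType) a r (B : 'M[F]_a) (P : 'M[F]_(a, r))
    (K : 'M[F]_r) :
  K \in unitmx -> P^T *m B *m P \in unitmx ->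
  P *m K *m invmx ((P *m K)^T *m B *m (P *m K)) *m (P *m K)^T
    = P *m invmx (P^T *m B *m P) *m P^T.
Proof.
set G := P^T *m B *m P => K_unit G_unit.
have -> : (P *m K)^T *m B *m (P *m K) = K^T *m G *m K by rewrite trmx_mul !mulmxA.
clearbody G; have KGK_unit : K^T *m G *m K \in unitmx.
  by rewrite !unitmx_mul unitmx_tr K_unit G_unit.
have -> : invmx (K^T *m G *m K) = invmx K *m invmx G *m invmx K^T.
  have inv : K^T *m G *m K *m (invmx K *m invmx G *m invmx K^T) = 1%:M.
    by rewrite !mulmxA mulmxK // mulmxK // mulmxV ?unitmx_tr.
  by rewrite -[LHS]mulmx1 -inv mulmxA mulVmx // mul1mx.
by rewrite trmx_mul !mulmxA mulmxK // mulmxKV ?unitmx_tr.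
Qed.

Lemma Amat_gram (R : comNzRingType) a r (lam : R) (L : 'M[R]_(a, r)) :
  L^T *m L = 1%:M ->
  1%:M + lam *: (L^T *m (cycD R a)^T *m cycD R a *m L) = L^T *m Amat a lam *m L.
Proof. by move=> LL; rewrite mulmxDr mulmxDl mulmx1 LL -scalemxAr -scalemxAl !mulmxA. Qed.

Lemma whitened_gram (R : comUnitRingType) a r (S : 'M[R]_a) (U : 'M[R]_(a, r)) :
  S^T = S -> S \in unitmx -> U^T *m U = 1%:M ->
  (invmx S *m U)^T *m (S *m S) *m (invmx S *m U) = 1%:M.
Proof.
move=> S_sym S_unit UU; rewrite trmx_mul trmx_inv S_sym !mulmxA mulmxKV //.
by rewrite -(mulmxA _ S) mulmxV // mulmx1.
Qed.

Lemma objL_eq_objU (R : fieldType) a b n r1 r2 (M : 'I_n -> 'M[R]_(a, b)) (lam : R)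
    (S : 'M[R]_a) (L U : 'M[R]_(a, r1)) (K : 'M[R]_r1) :
  S^T = S -> S \in unitmx -> S *m S = Amat a lam -> U^T *m U = 1%:M ->
  L^T *m L = 1%:M -> K \in unitmx -> L = invmx S *m U *m K ->
  forall Rm : 'M[R]_(b, r2), objL M lam L Rm = objU M (invmx S) U Rm.
Proof.
move=> S_sym S_unit SS UU LL K_unit LE Rm.
have proj : L *m invmx (1%:M + lam *: (L^T *m (cycD R a)^T *m cycD R a *m L)) *m L^T
    = invmx S *m U *m U^T *m invmx S.
  rewrite Amat_gram // -SS LE gram_proj_mulmx_unit ?whitened_gram ?unitmx1 //.
  by rewrite invmx1 mulmx1 trmx_mul trmx_inv S_sym mulmxA.
by apply: eq_bigr => i _; rewrite proj -!mulmxA mxtrace_mulC !mulmxA.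
Qed.

Theorem proposition2 (R : rcfType) (a b n r1 r2 : nat)
  (M : 'I_n -> 'M[R]_(a, b)) (lam : R) :
  0 <= lam -> (r1 <= a)%N -> (r2 <= b)%N ->
  forall S : 'M[R]_a, (* S = A^{1/2}, invmx S = A^{-1/2} *)
  sym_posdef S -> S *m S = Amat a lam ->
  (* every feasible L admits a thin SVD of A^{1/2} L *)
  (forall L : 'M[R]_(a, r1), L^T *m L = 1%:M ->
     exists (U : 'M[R]_(a, r1)) (Sig V : 'M[R]_r1), thin_svd (S *m L) U Sig V) /\
  (* for any such SVD, the objectives coincide and col(L) = col(A^{-1/2} U) *)
  (forall (L U : 'M[R]_(a, r1)) (Sig V : 'M[R]_r1),
     L^T *m L = 1%:M -> thin_svd (S *m L) U Sig V ->
     (forall Rm : 'M[R]_(b, r2), Rm^T *m Rm = 1%:M ->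
        objL M lam L Rm = objU M (invmx S) U Rm) /\
     colspace_eq L (invmx S *m U)) /\
  (* conversely every feasible U corresponds to a feasible L *)
  (forall U : 'M[R]_(a, r1), U^T *m U = 1%:M ->
     exists L : 'M[R]_(a, r1),
       L^T *m L = 1%:M /\ colspace_eq L (invmx S *m U) /\
       (forall Rm : 'M[R]_(b, r2), Rm^T *m Rm = 1%:M ->
          objL M lam L Rm = objU M (invmx S) U Rm)).
Proof.
move=> _ _ _ S S_pd SS; have S_unit := sym_posdef_unit S_pd; have [S_sym _] := S_pd.
have SL_free (L : 'M[R]_(a, r1)) : L^T *m L = 1%:M -> row_free (S *m L)^T.
  by move=> LL; apply: row_free_tr_unit_mul S_unit (row_free_tr_orthonormal LL).
split; [|split].
- by move=> L LL; apply: thin_svd_exists; apply: SL_free.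
- move=> L U Sig V LL svd; have K_unit := thin_svd_factor_unit svd (SL_free L LL).
  case: svd => UU [_ [_ SLE]].
  have LE : L = invmx S *m U *m (Sig *m V^T) by rewrite -[L](mulKmx S_unit) SLE !mulmxA.
  split; first by move=> Rm _; exact: objL_eq_objU S_sym S_unit SS UU LL K_unit LE Rm.
  by rewrite LE; apply: colspace_eq_mulmx_unit.
- move=> U UU; have S'_unit : invmx S \in unitmx by rewrite unitmx_inv.
  have P_free := row_free_tr_unit_mul S'_unit (row_free_tr_orthonormal UU).
  have [L LL [K K_unit LE]] := orthonormal_colbasis P_free.
  exists L; split=> //; split; first by rewrite LE; apply: colspace_eq_mulmx_unit.
  by move=> Rm _; exact: objL_eq_objU S_sym S_unit SS UU LL K_unit LE Rm.
Qed.
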